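(* Let $\Sigma\in\mathbb{M}(M,\mathbb{C})\otimes\mathbb{M}(N,\mathbb{C})$ be positive semidefinite and separable, and let $\{P_j\}_{j=1}^u$ be a resolution of identity in $\mathcal{C}_\Sigma$ consisting of minimal projections in $\mathcal{C}_\Sigma$. Then there exist $s\in\mathbb{N}$ and positive semidefinite matrices $R_1,\dots,R_s\in\mathbb{M}(M,\mathbb{C})$, $T_1,\dots,T_s\in\mathbb{M}(N,\mathbb{C})$ such that $\Sigma=\sum_{i=1}^s R_i\otimes T_i$ and $T_iP_j=P_jT_i$ for all $i\in\{1,\dots,s\}$ and $j\in\{1,\dots,u\}$.
   Context: We identify $\mathbb{M}(M,\mathbb{C})\otimes\mathbb{M}(N,\mathbb{C})$ with $\mathbb{M}(MN,\mathbb{C})$ via the Kronecker product, $(A\otimes B)_{(i,j),(l,m)}=A_{il}B_{jm}$. A positive semidefinite $\Sigma\in\mathbb{M}(M,\mathbb{C})\otimes\mathbb{M}(N,\mathbb{C})$ is called separable if it can be written as $\Sigma=\sum_{i=1}^n \tilde R_i\otimes\tilde T_i$ with all $\tilde R_i\in\mathbb{M}(M,\mathbb{C})$ and $\tilde T_i\in\mathbb{M}(N,\mathbb{C})$ positive semidefinite. The right commutant is $\mathcal{C}_\Sigma:=\{A\in\mathbb{M}(N,\mathbb{C}) : (\mathbf{1}_M\otimes A)\Sigma=\Sigma(\mathbf{1}_M\otimes A)\}$, a unital $*$-subalgebra of $\mathbb{M}(N,\mathbb{C})$. A projection means an orthogonal projection. A nonzero projection $P\in\mathcal{A}$ is minimal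 in a $*$-algebra $\mathcal{A}$ if every projection $Q\in\mathcal{A}$ with $Q\le P$ satisfies $Q=0$ or $Q=P$. A resolution of identity in $\mathcal{A}$ is a finite family of mutually orthogonal projections $P_i\in\mathcal{A}$ with $\sum_i P_i=\mathbf{1}_N$. *)

(* Complex scalars: an arbitrary numClosedFieldType C
   (e.g. complex numbers), with conjugation Num.conj. *)
From HB Require Import structures.
From mathcomp Require Import all_boot all_order all_algebra.
From mathcomp Require Export mxtens.
Set Implicit Arguments. Unset Strict Implicit. Unset Printing Implicit Defensive.
Import Order.TTheory GRing.Theory Num.Theory.
Local Open Scope ring_scope.

Definition adjmx (C : numClosedFieldType) m n (A : 'M[C]_(m, n)) : 'M[C]_(n, m) :=
  (map_mx Num.conj A)^T.

Definition psd (C : numClosedFieldType) n (A : 'M[C]_n) : Prop :=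
  adjmx A = A /\ forall v : 'cV[C]_n, 0 <= (adjmx v *m A *m v) 0 0.

(* Kronecker product: (A (x) B)_{(i,j),(l,m)} = A_{il} B_{jm},
   with (i,j) indexed as i*N + j (mathcomp real_closed mxtens). *)
Definition kron (C : numClosedFieldType) M N (A : 'M[C]_M) (B : 'M[C]_N)
  : 'M[C]_(M * N) := tensmx A B.

Definition separable (C : numClosedFieldType) M N (S : 'M[C]_(M * N)) : Prop :=
  exists (n : nat) (Rt : 'I_n -> 'M[C]_M) (Tt : 'I_n -> 'M[C]_N),
    (forall i, psd (Rt i)) /\ (forall i, psd (Tt i)) /\
    S = \sum_(i < n) kron (Rt i) (Tt i).

Definition in_commutant (C : numClosedFieldType) M N (S : 'M[C]_(M * N))
  (A : 'M[C]_N) : Prop :=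
  kron (1%:M : 'M[C]_M) A *m S = S *m kron (1%:M : 'M[C]_M) A.

Definition is_proj (C : numClosedFieldType) N (P : 'M[C]_N) : Prop :=
  P *m P = P /\ adjmx P = P.

Definition minimal_proj (C : numClosedFieldType) M N (S : 'M[C]_(M * N))
  (P : 'M[C]_N) : Prop :=
  in_commutant S P /\ is_proj P /\ P <> 0 /\
  forall Q : 'M[C]_N, in_commutant S Q -> is_proj Q -> psd (P - Q) ->
    Q = 0 \/ Q = P.

Definition resolution_of_identity (C : numClosedFieldType) M N
  (S : 'M[C]_(M * N)) (u : nat) (P : 'I_u -> 'M[C]_N) : Prop :=
  (forall j, in_commutant S (P j) /\ is_proj (P j)) /\
  (forall j k, j != k -> P j *m P k = 0) /\
  \sum_(j < u) P j = 1%:M.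

From HB Require Import structures.
From mathcomp Require Import all_boot all_order all_algebra.
Import Order.TTheory GRing.Theory Num.Theory.
Local Open Scope ring_scope.

(* Each [1 (x) P_j] is an idempotent commuting with [S], and these idempotents
   sum to [1], so [S = \sum_j (1 (x) P_j) S (1 (x) P_j)].  Substituting a
   separable decomposition [S = \sum_i R_i (x) T_i] gives
   [S = \sum_(j,i) R_i (x) P_j T_i P_j]; the compressions [P_j T_i P_j] are
   positive semidefinite and commute with every [P_k] by orthogonality. *)

Section Tensor.

Variable R : pzRingType.

Lemma tensmx_sumr m n p q (I : finType) (A : 'M[R]_(m, n)) (B : I -> 'M[R]_(p, q)) :
  A *t (\sum_(j : I) B j) = \sum_(j : I) A *t B j.
Proof.
apply/matrixP => i k; rewrite summxE !mxE summxE mulr_sumr.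
by apply: eq_bigr => j _; rewrite !mxE.
Qed.

Lemma tensmx11 m n : (1%:M : 'M[R]_m) *t (1%:M : 'M[R]_n) = 1%:M.
Proof.
apply/matrixP => i k.
case: (mxtens_indexP i) => a b; case: (mxtens_indexP k) => c d.
rewrite tensmxE !mxE (can_eq (@mxtens_indexK _ _)) xpair_eqE.
by rewrite -natrM mulnb.
Qed.

Lemma sum_mxtens_unindex (V : nmodType) u n (F : 'I_u * 'I_n -> V) :
  \sum_(p : 'I_u * 'I_n) F p = \sum_(t < u * n) F (mxtens_unindex t).
Proof.
rewrite (reindex (@mxtens_unindex u n)) //.
by exists (@mxtens_index u n) => t _; [exact: mxtens_unindexK | exact: mxtens_indexK].
Qed.

End Tensor.

Section Pinching.

Variables (R : pzRingType) (n u : nat) (E : 'I_u -> 'M[R]_n).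
Hypotheses (E_idem : forall j, E j *m E j = E j) (E_sum : \sum_(j < u) E j = 1%:M).

Lemma pinch_commuting (S : 'M[R]_n) :
  (forall j, E j *m S = S *m E j) -> S = \sum_(j < u) E j *m S *m E j.
Proof.
move=> ES; rewrite -{1}[S]mulmx1 -E_sum mulmx_sumr.
by apply: eq_bigr => j _; rewrite -{1}E_idem mulmxA ES.
Qed.

Hypothesis E_orth : forall j k, j != k -> E j *m E k = 0.

Lemma compress_commute (T : 'M[R]_n) j k :
  E k *m T *m E k *m E j = E j *m (E k *m T *m E k).
Proof.
case: (eqVneq j k) => [->|njk]; first by rewrite -mulmxA E_idem -{1}E_idem !mulmxA.
by rewrite -mulmxA E_orth 1?eq_sym // mulmx0 !mulmxA E_orth // !mul0mx.
Qed.

End Pinching.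

Arguments pinch_commuting {R n u E}.

Lemma pinch_tens_sum (R : comPzRingType) m n u k (S : 'M[R]_(m * n))
    (A : 'I_k -> 'M[R]_m) (B : 'I_k -> 'M[R]_n) (P : 'I_u -> 'M[R]_n) :
  (forall j, P j *m P j = P j) -> \sum_(j < u) P j = 1%:M ->
  (forall j, (1%:M *t P j) *m S = S *m (1%:M *t P j)) ->
  S = \sum_(i < k) A i *t B i ->
  S = \sum_(p : 'I_u * 'I_k) A p.2 *t (P p.1 *m B p.2 *m P p.1).
Proof.
move=> P_idem P_sum PS defS.
have E_idem j : (1%:M *t P j) *m (1%:M *t P j) = 1%:M *t P j :> 'M[R]_(m * n).
  by rewrite tensmx_mul mulmx1 P_idem.
have E_sum : \sum_(j < u) (1%:M *t P j) = 1%:M :> 'M[R]_(m * n).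
  by rewrite -tensmx_sumr P_sum tensmx11.
rewrite {1}(pinch_commuting E_idem E_sum _ PS).
rewrite -(pair_bigA _ (fun j i => A i *t (P j *m B i *m P j))) /=.
apply: eq_bigr => j _; rewrite defS mulmx_sumr mulmx_suml.
by apply: eq_bigr => i _; rewrite !tensmx_mul mul1mx mulmx1.
Qed.

Lemma adjmxM (C : numClosedFieldType) m n p (A : 'M[C]_(m, n)) (B : 'M[C]_(n, p)) :
  adjmx (A *m B) = adjmx B *m adjmx A.
Proof. by rewrite /adjmx map_mxM trmx_mul. Qed.

Lemma psd_sandwich (C : numClosedFieldType) n (P T : 'M[C]_n) :
  adjmx P = P -> psd T -> psd (P *m T *m P).
Proof.
move=> P_herm [T_herm T_ge0]; split; first by rewrite !adjmxM P_herm T_herm mulmxA.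
by move=> v; have := T_ge0 (P *m v); rewrite adjmxM P_herm !mulmxA.
Qed.

Theorem lemma1 (C : numClosedFieldType) (M N : nat) (S : 'M[C]_(M * N))
  (u : nat) (P : 'I_u -> 'M[C]_N) :
  psd S -> separable S ->
  resolution_of_identity S P ->
  (forall j, minimal_proj S (P j)) ->
  exists (s : nat) (R : 'I_s -> 'M[C]_M) (T : 'I_s -> 'M[C]_N),
    (forall i, psd (R i)) /\ (forall i, psd (T i)) /\
    S = \sum_(i < s) kron (R i) (T i) /\
    (forall i j, T i *m P j = P j *m T i).
Proof.
move=> _ [n [Rt [Tt [Rt_psd [Tt_psd defS]]]]] [P_proj [P_orth P_sum]] _.
have P_comm j := (P_proj j).1.
have P_idem j := (P_proj j).2.1.
have P_herm j := (P_proj j).2.2.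
pose ix t := @mxtens_unindex u n t.
exists (u * n)%N, (fun t => Rt (ix t).2),
  (fun t => P (ix t).1 *m Tt (ix t).2 *m P (ix t).1).
split=> [t|]; first exact: Rt_psd.
split=> [t|]; first exact: psd_sandwich.
split=> [|t j]; last exact: compress_commute.
rewrite -(@sum_mxtens_unindex _ u n (fun p => kron (Rt p.2) (P p.1 *m Tt p.2 *m P p.1))).
exact: pinch_tens_sum defS.
Qed.
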